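(* Let $a\in\mathbb{C}$, let $v=\{v_n\}_{n=1}^\infty\in\ell^1(\mathbb{N})$ be complex and $V=\mathrm{diag}(v_1,v_2,\dots)$. Then \[ \sigma_{\mathrm p}(J_a+V)\subset\{\pm2\}\cup\Big\{k+k^{-1}\ \Big|\ 0<|k|<1,\ |k^{-1}-k|\,|1-ak|\le\big(|1-ak|+|k-a|\big)\|v\|_{\ell^1}\Big\}. \]
   Context: $\mathbb{N}=\{1,2,\dots\}$. For $a\in\mathbb{C}$, $J_a$ is the operator on $\ell^2(\mathbb{N})$ with $(J_a\psi)_1=a\psi_1+\psi_2$ and $(J_a\psi)_n=\psi_{n-1}+\psi_{n+1}$ for $n\ge2$. $\sigma_{\mathrm p}$ denotes the set of eigenvalues. *)

From Stdlib Require Import Reals.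
From Coquelicot Require Import Coquelicot.
Open Scope R_scope.

(* Sequences on N = {1,2,...} are represented as functions [nat -> C]
   with 0-based indexing: [psi 0] is psi_1, [psi n] is psi_{n+1}. *)

Definition in_l2 (psi : nat -> C) : Prop := ex_series (fun n => (Cmod (psi n))^2).

Definition in_l1 (v : nat -> C) : Prop := ex_series (fun n => Cmod (v n)).
Definition l1norm (v : nat -> C) : R := Series (fun n => Cmod (v n)).

(* ((J_a + V) psi)_n, 0-based:
   ((J_a+V)psi)_1 = a psi_1 + psi_2 + v_1 psi_1,
   ((J_a+V)psi)_n = psi_{n-1} + psi_{n+1} + v_n psi_n  for n >= 2. *)
Definition JaV (a : C) (v : nat -> C) (psi : nat -> C) (n : nat) : C :=
  match n with
  | O => Cplus (Cplus (Cmult a (psi O)) (psi 1%nat)) (Cmult (v O) (psi O))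
  | S m => Cplus (Cplus (psi m) (psi (S (S m)))) (Cmult (v (S m)) (psi (S m)))
  end.

(* lam is an eigenvalue of J_a + V on l^2(N) (V is bounded as v in l^1, so
   J_a + V is a bounded operator defined on all of l^2). *)
Definition eigenvalue_JaV (a : C) (v : nat -> C) (lam : C) : Prop :=
  exists psi : nat -> C,
    in_l2 psi /\ (exists n, psi n <> RtoC 0) /\
    forall n, JaV a v psi n = Cmult lam (psi n).

(* Write lam = k + 1/k with 0 < |k| <= 1 and prepend psi_0 := a psi_1, so that the
   extended sequence q satisfies q_{n+2} - lam q_{n+1} + q_n = - v_n psi_n for every n.
   Then u^c_n := q_{n+1} - c q_n obeys the first-order recurrences
   u^k_{n+1} = k^{-1} u^k_n - v_n psi_n and u^{1/k}_{n+1} = k u^{1/k}_n - v_n psi_n,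
   and (k^{-1} - k) q_n = u^k_n - u^{1/k}_n.  Since psi is in l^2, the first recurrence
   can be run backwards from infinity: |u^k_n| <= sum_{j >= n} |v_j psi_j|.
   If |k| < 1, the second one runs forwards from u^{1/k}_0; at a maximum M of |psi| this
   gives |k^{-1} - k| M <= M ||v|| + |k| |u^{1/k}_0|, and the boundary identity
   |1 - a k| |k u^{1/k}_0| = |k - a| |u^k_0| <= |k - a| M ||v|| yields the bound.
   If |k| = 1 and k <> +-1, both recurrences run backwards, which is absurd at a maximum
   of |psi| on a tail where sum |v_j| < |k^{-1} - k| / 4; so psi vanishes eventually,
   hence everywhere by the three-term recurrence. *)

From Stdlib Require Import Reals Lra Lia Classical.
From Coquelicot Require Import Coquelicot.
Open Scope R_scope.

Lemma Rle_of_le_plus_lim_0 (X Y : R) (z : nat -> R) :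
  (forall L, X <= Y + z L) -> is_lim_seq z 0 -> X <= Y.
Proof.
  intros Hle Hz.
  assert (Hlim : is_lim_seq (fun L => Y + z L) (Y + 0)).
  { apply (is_lim_seq_plus' (fun _ => Y)); [apply is_lim_seq_const | exact Hz]. }
  pose proof (is_lim_seq_le (fun _ => X) _ X (Y + 0) Hle (is_lim_seq_const X) Hlim) as H.
  simpl in H; lra.
Qed.

Lemma sum_n_m_le_loc (a b : nat -> R) (n m : nat) :
  (forall k, (n <= k <= m)%nat -> a k <= b k) -> sum_n_m a n m <= sum_n_m b n m.
Proof.
  intros Hab. destruct (Nat.lt_ge_cases m n) as [Hmn | Hnm].
  - rewrite !sum_n_m_zero by exact Hmn. apply Rle_refl.
  - rewrite !sum_n_m_Reals by exact Hnm. apply sum_Rle. intros k Hk. apply Hab. lia.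
Qed.

Lemma sum_n_le_Series (a : nat -> R) :
  (forall n, 0 <= a n) -> ex_series a -> forall n, sum_n a n <= Series a.
Proof.
  intros Ha Hs. apply is_lim_seq_incr_compare; [exact (Series_correct _ Hs) |].
  intros n. rewrite sum_Sn. specialize (Ha (S n)). unfold plus; simpl; lra.
Qed.

Lemma sum_n_m_le_Series_sub (a : nat -> R) (n m : nat) :
  (forall j, 0 <= a j) -> ex_series a -> sum_n_m a (S n) m <= Series a - sum_n a n.
Proof.
  intros Ha Hs. pose proof (sum_n_le_Series a Ha Hs) as Hn.
  destruct (Nat.lt_ge_cases m (S n)) as [Hmn | Hnm].
  - rewrite sum_n_m_zero by exact Hmn. specialize (Hn n). unfold zero; simpl; lra.
  - pose proof (sum_n_m_Chasles a 0 n m ltac:(lia) ltac:(lia)) as Hsplit.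
    specialize (Hn m). unfold sum_n, plus in *; simpl in *; lra.
Qed.

Lemma ex_series_tail_lt (a : nat -> R) (eps : R) :
  ex_series a -> 0 < eps -> exists N, forall n m, (N <= n)%nat -> sum_n_m a n m < eps.
Proof.
  intros Hs Heps. destruct (Cauchy_ex_series a Hs (mkposreal eps Heps)) as [N HN].
  exists N. intros n m Hn. destruct (Nat.lt_ge_cases m n) as [Hmn | Hnm].
  - rewrite sum_n_m_zero by exact Hmn. exact Heps.
  - eapply Rle_lt_trans; [apply Rle_abs | exact (HN n m Hn ltac:(lia))].
Qed.

Lemma l2_Cmod_lim_0 (psi : nat -> C) : in_l2 psi -> is_lim_seq (fun n => Cmod (psi n)) 0.
Proof.
  intros H. rewrite <- sqrt_0.
  apply (is_lim_seq_ext (fun n => sqrt (Cmod (psi n) ^ 2))).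
  - intros n. apply sqrt_pow2, Cmod_ge_0.
  - apply is_lim_seq_continuous; [apply continuity_pt_sqrt, Rle_refl | exact (ex_series_lim_0 _ H)].
Qed.

Lemma exists_argmax_interval (f : nat -> R) (N D : nat) :
  exists n0, (N <= n0 <= N + D)%nat /\ forall j, (N <= j <= N + D)%nat -> f j <= f n0.
Proof.
  induction D as [| D [n0 [Hn0 Hmax]]].
  - exists N. split; [lia |]. intros j Hj. replace j with N by lia. apply Rle_refl.
  - destruct (Rle_lt_dec (f (N + S D)%nat) (f n0)) as [Hle | Hlt].
    + exists n0. split; [lia |]. intros j Hj.
      destruct (Nat.eq_dec j (N + S D)) as [-> | Hne]; [exact Hle | apply Hmax; lia].
    + exists (N + S D)%nat. split; [lia |]. intros j Hj.
      destruct (Nat.eq_dec j (N + S D)) as [-> | Hne]; [apply Rle_refl |].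
      specialize (Hmax j ltac:(lia)). lra.
Qed.

Lemma exists_argmax_tail (f : nat -> R) (N m : nat) :
  is_lim_seq f 0 -> (N <= m)%nat -> 0 < f m ->
  exists n0, (N <= n0)%nat /\ forall j, (N <= j)%nat -> f j <= f n0.
Proof.
  intros Hf Hm Hpos. apply is_lim_seq_spec in Hf.
  destruct (Hf (mkposreal _ Hpos)) as [N1 HN1]; simpl in HN1.
  destruct (exists_argmax_interval f N (N1 + m)) as [n0 [Hn0 Hmax]].
  exists n0. split; [lia |]. intros j Hj.
  destruct (Nat.le_gt_cases j (N + (N1 + m))) as [Hjle | Hjgt]; [apply Hmax; lia |].
  pose proof (Hmax m ltac:(lia)) as Hfm. pose proof (HN1 j ltac:(lia)) as Hfj.
  rewrite Rminus_0_r in Hfj. pose proof (Rle_abs (f j)). lra.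
Qed.

Lemma Cmod_sub_le (x y : C) : Cmod (x - y) <= Cmod x + Cmod y.
Proof. unfold Cminus. rewrite <- (Cmod_opp y). apply Cmod_triangle. Qed.

Lemma Cmod_backward_le (c : C) (x g : nat -> C) :
  Cmod c <= 1 -> (forall n, x n = c * (x (S n) + g n))%C ->
  forall L n, Cmod (x n) <= Cmod (x (S (n + L))) + sum_n_m (fun j => Cmod (g j)) n (n + L).
Proof.
  intros Hc Hx.
  assert (Hstep : forall n, Cmod (x n) <= Cmod (x (S n)) + Cmod (g n)).
  { intros n. rewrite Hx, Cmod_mult.
    pose proof (Cmod_triangle (x (S n)) (g n)). pose proof (Cmod_ge_0 (x (S n) + g n)). nra. }
  induction L as [| L IHL]; intros n.
  - rewrite Nat.add_0_r, sum_n_n. apply Hstep.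
  - rewrite (sum_Sn_m _ n) by lia. specialize (IHL (S n)).
    replace (S n + L)%nat with (n + S L)%nat in IHL by lia.
    pose proof (Hstep n). unfold plus; simpl; lra.
Qed.

Lemma Cmod_forward_le (c : C) (x g : nat -> C) :
  Cmod c <= 1 -> (forall n, x (S n) = c * x n - g n)%C ->
  forall n, Cmod (x (S n)) <= Cmod c * Cmod (x O) + sum_n (fun j => Cmod (g j)) n.
Proof.
  intros Hc Hx n. induction n as [| n IHn].
  - rewrite Hx, sum_O, <- Cmod_mult. apply Cmod_sub_le.
  - rewrite Hx, sum_Sn. unfold plus; simpl.
    pose proof (Cmod_sub_le (c * x (S n)) (g (S n))) as Hstep. rewrite Cmod_mult in Hstep.
    pose proof (Cmod_ge_0 (x (S n))). nra.
Qed.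

Lemma sum_Cmod_mult_le (v psi : nat -> C) (M : R) (n m : nat) :
  (forall j, (n <= j)%nat -> Cmod (psi j) <= M) ->
  sum_n_m (fun j => Cmod (v j * psi j)) n m <= M * sum_n_m (fun j => Cmod (v j)) n m.
Proof.
  intros HM. apply Rle_trans with (sum_n_m (fun j => M * Cmod (v j)) n m).
  - apply sum_n_m_le_loc. intros j Hj. rewrite Cmod_mult, Rmult_comm.
    apply Rmult_le_compat_r; [apply Cmod_ge_0 | apply HM; lia].
  - exact (Req_le _ _ (sum_n_m_mult_l M _ n m)).
Qed.

Lemma C_sqrt_exists (z : C) : exists w : C, (w * w = z)%C.
Proof.
  destruct z as [x y].
  set (r := sqrt (x * x + y * y)).
  assert (Hr : r * r = x * x + y * y) by (apply sqrt_sqrt; nra).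
  assert (Hr0 : 0 <= r) by apply sqrt_pos.
  assert (Hrx : - r <= x <= r) by (split; nra).
  set (p := sqrt ((r + x) / 2)). set (q := sqrt ((r - x) / 2)).
  assert (Hp : p * p = (r + x) / 2) by (apply sqrt_sqrt; lra).
  assert (Hq : q * q = (r - x) / 2) by (apply sqrt_sqrt; lra).
  assert (Hpq : p * q = Rabs y / 2).
  { unfold p, q. rewrite <- sqrt_mult by lra.
    replace ((r + x) / 2 * ((r - x) / 2)) with (Rsqr (Rabs y / 2)).
    - apply sqrt_Rsqr. pose proof (Rabs_pos y); lra.
    - assert (Habs : Rabs y * Rabs y = y * y) by (rewrite <- Rabs_mult; apply Rabs_pos_eq; nra).
      unfold Rsqr. nra. }
  set (s := if Rle_dec 0 y then 1 else -1).
  exists (p, s * q). unfold Cmult; simpl. f_equal.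
  - unfold s; destruct (Rle_dec 0 y); nra.
  - unfold s; destruct (Rle_dec 0 y).
    + rewrite Rabs_pos_eq in Hpq by lra. nra.
    + rewrite Rabs_left in Hpq by lra. nra.
Qed.

Lemma joukowski_preimage_in_closed_disk (lam : C) :
  exists k : C, k <> 0 /\ Cmod k <= 1 /\ lam = (k + / k)%C.
Proof.
  assert (H2 : RtoC 2 <> 0) by (intros E; apply RtoC_inj in E; lra).
  destruct (C_sqrt_exists (lam * lam - 2 * 2)%C) as [w Hw].
  set (k1 := ((lam + w) / 2)%C). set (k2 := ((lam - w) / 2)%C).
  assert (Hprod : (k1 * k2 = 1)%C).
  { unfold k1, k2. replace ((lam + w) / 2 * ((lam - w) / 2))%C
      with ((lam * lam - w * w) / (2 * 2))%C by (field; exact H2).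
    rewrite Hw. field. }
  assert (Hsum : lam = (k1 + k2)%C) by (unfold k1, k2; field; exact H2).
  assert (Hk1 : k1 <> 0) by (intros E; rewrite E, Cmult_0_l in Hprod; exact (C1_nz (eq_sym Hprod))).
  assert (Hk2 : k2 <> 0) by (intros E; rewrite E, Cmult_0_r in Hprod; exact (C1_nz (eq_sym Hprod))).
  assert (Hmod : Cmod k1 * Cmod k2 = 1) by (rewrite <- Cmod_mult, Hprod; exact Cmod_1).
  destruct (Rle_lt_dec (Cmod k1) 1) as [Hle | Hgt].
  - exists k1. split; [exact Hk1 | split; [exact Hle |]].
    rewrite Hsum. f_equal. rewrite <- (Cmult_1_l (/ k1)), <- Hprod. field. exact Hk1.
  - exists k2. split; [exact Hk2 | split; [pose proof (Cmod_ge_0 k2); nra |]].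
    rewrite Hsum, Cplus_comm. f_equal. rewrite <- (Cmult_1_l (/ k2)), <- Hprod. field. exact Hk2.
Qed.

Lemma Cinv_sub_eq_0 (k : C) : k <> 0 -> (/ k - k = 0)%C -> k = 1 \/ k = (- 1)%C.
Proof.
  intros Hk H.
  assert (E : ((k - 1) * (k + 1) = - k * (/ k - k))%C) by (field; exact Hk).
  rewrite H, Cmult_0_r in E. apply (f_equal Cmod) in E. rewrite Cmod_mult, Cmod_0 in E.
  destruct (Rmult_integral _ _ E) as [E1 | E1]; apply Cmod_eq_0 in E1; [left | right].
  - replace k with ((k - 1) + 1)%C by ring. rewrite E1. ring.
  - replace k with ((k + 1) - 1)%C by ring. rewrite E1. ring.
Qed.

Section EigenvectorRecurrence.

Variables (a lam : C) (v psi : nat -> C).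
Hypothesis eigen : forall n, JaV a v psi n = (lam * psi n)%C.

(* In the 1-based indexing of J_a, [psi_ext n] is psi_n with psi_0 := a psi_1 prepended;
   this turns the boundary row of J_a + V into the bulk recurrence. *)
Definition psi_ext (n : nat) : C :=
  match n with O => (a * psi O)%C | S m => psi m end.

Definition psi_diff (k : C) (n : nat) : C := (psi_ext (S n) - k * psi_ext n)%C.

Lemma psi_ext_rec n :
  psi_ext (S (S n)) = (lam * psi_ext (S n) - psi_ext n - v n * psi n)%C.
Proof. destruct n as [| m]; simpl; rewrite <- eigen; simpl; ring. Qed.

Lemma psi_diff_succ k k' : (k * k' = 1)%C -> lam = (k + k')%C ->
  forall n, psi_diff k (S n) = (k' * psi_diff k n - v n * psi n)%C.
Proof.
  intros Hkk' Hlam n. unfold psi_diff. rewrite psi_ext_rec, Hlam.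
  rewrite <- (Cmult_1_l (psi_ext n)) at 1. rewrite <- Hkk'. ring.
Qed.

Lemma psi_diff_sub k k' n : ((k' - k) * psi_ext n = psi_diff k n - psi_diff k' n)%C.
Proof. unfold psi_diff. ring. Qed.

Lemma eigenvector_zero_of_eventually_zero :
  (exists N, forall m, (N <= m)%nat -> psi m = 0) -> forall n, psi n = 0.
Proof.
  intros [N HN].
  assert (Hdown : forall t m, (N <= m + t)%nat -> psi m = 0).
  { induction t as [| t IHt]; intros m Hm; [apply HN; lia |].
    destruct (Compare_dec.le_lt_dec N m) as [HNm | HmN]; [apply HN, HNm |].
    pose proof (eigen (S m)) as E; simpl in E.
    rewrite (IHt (S m)), (IHt (S (S m))) in E by lia.
    replace (psi m) with (psi m + 0 + v (S m) * 0)%C by ring. rewrite E. ring. }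
  intros n. apply (Hdown N n). lia.
Qed.

Lemma Cmod_psi_le_psi_diff (k : C) (n : nat) : k <> 0 ->
  Cmod (/ k - k) * Cmod (psi n) <= Cmod (psi_diff k (S n)) + Cmod (psi_diff (/ k) (S n)).
Proof.
  intros Hk. rewrite <- Cmod_mult. change (psi n) with (psi_ext (S n)).
  rewrite psi_diff_sub. apply Cmod_sub_le.
Qed.

Hypothesis psi_l2 : in_l2 psi.

Lemma Cmod_psi_diff_lim_0 k n : is_lim_seq (fun L => Cmod (psi_diff k (S (n + L)))) 0.
Proof.
  pose proof (l2_Cmod_lim_0 psi psi_l2) as Hpsi.
  apply is_lim_seq_le_le with (fun _ => 0)
    (fun L => Cmod (psi (S (n + L))) + Cmod k * Cmod (psi (n + L)%nat)).
  - intros L. split; [apply Cmod_ge_0 |].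
    unfold psi_diff; simpl. rewrite <- Cmod_mult. apply Cmod_sub_le.
  - apply is_lim_seq_const.
  - replace (Finite 0) with (Finite (0 + Cmod k * 0)) by (f_equal; ring).
    apply is_lim_seq_plus'.
    + apply (is_lim_seq_ext (fun L => Cmod (psi (L + S n)%nat))).
      { intros L. do 2 f_equal. lia. }
      apply (is_lim_seq_incr_n (fun m => Cmod (psi m))), Hpsi.
    + apply is_lim_seq_mult'; [apply is_lim_seq_const |].
      apply (is_lim_seq_ext (fun L => Cmod (psi (L + n)%nat))).
      { intros L. do 2 f_equal. lia. }
      apply (is_lim_seq_incr_n (fun m => Cmod (psi m))), Hpsi.
Qed.

Lemma Cmod_psi_diff_le k k' n M T :
  (k * k' = 1)%C -> lam = (k + k')%C -> Cmod k <= 1 ->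
  (forall j, (n <= j)%nat -> Cmod (psi j) <= M) ->
  (forall L, sum_n_m (fun j => Cmod (v j)) n (n + L) <= T) ->
  Cmod (psi_diff k n) <= M * T.
Proof.
  intros Hkk' Hlam Hk HM HT.
  assert (Hback : forall m, psi_diff k m = (k * (psi_diff k (S m) + v m * psi m))%C).
  { intros m. rewrite (psi_diff_succ k k' Hkk' Hlam).
    replace (k * (k' * psi_diff k m - v m * psi m + v m * psi m))%C
      with ((k * k') * psi_diff k m)%C by ring.
    rewrite Hkk'. ring. }
  assert (HM0 : 0 <= M) by (eapply Rle_trans; [apply Cmod_ge_0 | apply (HM n), le_n]).
  apply (Rle_of_le_plus_lim_0 _ _ (fun L => Cmod (psi_diff k (S (n + L)))));
    [intros L | apply Cmod_psi_diff_lim_0].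
  rewrite Rplus_comm.
  eapply Rle_trans; [apply (Cmod_backward_le k _ _ Hk Hback) |].
  apply Rplus_le_compat_l. eapply Rle_trans; [apply sum_Cmod_mult_le, HM |].
  apply Rmult_le_compat_l; [exact HM0 | apply HT].
Qed.

Hypothesis v_l1 : in_l1 v.

Lemma interior_eigenvalue_bound (k : C) :
  k <> 0 -> Cmod k < 1 -> lam = (k + / k)%C -> (exists n, psi n <> 0) ->
  Cmod (/ k - k) * Cmod (1 - a * k)
    <= (Cmod (1 - a * k) + Cmod (k - a)) * l1norm v.
Proof.
  intros Hk0 Hk1 Hlam [m Hm].
  set (K := Cmod (/ k - k)). set (P := Cmod (1 - a * k)). set (Q := Cmod (k - a)).
  assert (Hv : forall j, 0 <= Cmod (v j)) by (intros; apply Cmod_ge_0).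
  destruct (exists_argmax_tail (fun j => Cmod (psi j)) 0 m (l2_Cmod_lim_0 psi psi_l2)
              (Nat.le_0_l m) (proj1 (Cmod_gt_0 _) Hm)) as [n0 [_ Hmax]].
  set (M := Cmod (psi n0)) in Hmax.
  assert (HM : 0 < M) by (eapply Rlt_le_trans; [apply Cmod_gt_0, Hm | apply Hmax; lia]).
  assert (Hkk' : (k * / k = 1)%C) by (apply Cinv_r, Hk0).
  assert (Hk'k : (/ k * k = 1)%C) by (apply Cinv_l, Hk0).
  assert (Hlam' : lam = (/ k + k)%C) by (rewrite Hlam; apply Cplus_comm).
  pose proof (Cmod_psi_le_psi_diff k n0 Hk0) as Hsplit. fold K M in Hsplit.
  assert (Htail : Cmod (psi_diff k (S n0)) <= M * (l1norm v - sum_n (fun j => Cmod (v j)) n0)).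
  { apply (Cmod_psi_diff_le k (/ k)); [exact Hkk' | exact Hlam | lra | intros j _; apply Hmax; lia |].
    intros L. apply sum_n_m_le_Series_sub; [exact Hv | exact v_l1]. }
  assert (Hhead : Cmod (psi_diff (/ k) (S n0))
                  <= Cmod k * Cmod (psi_diff (/ k) 0) + M * sum_n (fun j => Cmod (v j)) n0).
  { eapply Rle_trans; [apply (Cmod_forward_le k _ (fun j => v j * psi j)%C) |].
    - lra.
    - apply (psi_diff_succ (/ k) k Hk'k Hlam').
    - apply Rplus_le_compat_l, sum_Cmod_mult_le. intros j _. apply Hmax. lia. }
  assert (Hinit : Cmod (psi_diff k 0) <= M * l1norm v).
  { apply (Cmod_psi_diff_le k (/ k)); [exact Hkk' | exact Hlam | lra | intros j _; apply Hmax; lia |].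
    intros L. exact (sum_n_le_Series _ Hv v_l1 L). }
  assert (Hratio : P * (Cmod k * Cmod (psi_diff (/ k) 0)) = Q * Cmod (psi_diff k 0)).
  { unfold P, Q. rewrite <- !Cmod_mult. f_equal. unfold psi_diff; simpl. field. exact Hk0. }
  assert (HP : 0 <= P) by apply Cmod_ge_0. assert (HQ : 0 <= Q) by apply Cmod_ge_0.
  apply (Rmult_le_reg_r M); [exact HM |]. nra.
Qed.

Lemma unimodular_eigenvector_eventually_zero (k : C) :
  k <> 0 -> Cmod k = 1 -> lam = (k + / k)%C -> (/ k - k)%C <> 0 ->
  exists N, forall m, (N <= m)%nat -> psi m = 0.
Proof.
  intros Hk0 Hk1 Hlam Hd.
  set (K := Cmod (/ k - k)). assert (HK : 0 < K) by (apply Cmod_gt_0, Hd).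
  destruct (ex_series_tail_lt _ (K / 4) v_l1 ltac:(lra)) as [N HN].
  exists N. intros m Hm. destruct (classic (psi m = 0)) as [| Hnz]; [assumption | exfalso].
  destruct (exists_argmax_tail (fun j => Cmod (psi j)) N m (l2_Cmod_lim_0 psi psi_l2)
              Hm (proj1 (Cmod_gt_0 _) Hnz)) as [n0 [Hn0 Hmax]].
  set (M := Cmod (psi n0)) in Hmax.
  assert (HM : 0 < M) by (eapply Rlt_le_trans; [apply Cmod_gt_0, Hnz | apply Hmax, Hm]).
  assert (Hbound : forall c c', (c * c' = 1)%C -> lam = (c + c')%C -> Cmod c = 1 ->
                     Cmod (psi_diff c (S n0)) <= M * (K / 4)).
  { intros c c' Hcc' Hlamc Hc.
    apply (Cmod_psi_diff_le c c'); [exact Hcc' | exact Hlamc | lra | intros j Hj; apply Hmax; lia |].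
    intros L. left. apply HN. lia. }
  pose proof (Hbound k (/ k)%C (Cinv_r k Hk0) Hlam Hk1).
  pose proof (Hbound (/ k)%C k (Cinv_l k Hk0) ltac:(rewrite Hlam; apply Cplus_comm)
                ltac:(rewrite Cmod_inv, Hk1 by exact Hk0; apply Rinv_1)).
  pose proof (Cmod_psi_le_psi_diff k n0 Hk0) as Hsplit. fold K M in Hsplit.
  nra.
Qed.

End EigenvectorRecurrence.

Theorem corollary3p5 (a : C) (v : nat -> C) (hv : in_l1 v) (lam : C) :
  eigenvalue_JaV a v lam ->
  lam = RtoC 2 \/ lam = RtoC (-2) \/
  exists k : C,
    0 < Cmod k < 1 /\
    lam = Cplus k (Cinv k) /\
    Cmod (Cminus (Cinv k) k) * Cmod (Cminus (RtoC 1) (Cmult a k))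
      <= (Cmod (Cminus (RtoC 1) (Cmult a k)) + Cmod (Cminus k a)) * l1norm v.
Proof.
  intros [psi [Hl2 [[m Hm] Heig]]].
  destruct (joukowski_preimage_in_closed_disk lam) as [k [Hk0 [Hk1 Hlam]]].
  destruct (Rle_lt_or_eq_dec _ _ Hk1) as [Hlt | Hunit].
  - right; right. exists k.
    split; [split; [apply Cmod_gt_0, Hk0 | exact Hlt] | split; [exact Hlam |]].
    apply (interior_eigenvalue_bound a lam v psi Heig Hl2 hv k Hk0 Hlt Hlam). exists m. exact Hm.
  - destruct (classic ((/ k - k)%C = 0)) as [Hd | Hd].
    + destruct (Cinv_sub_eq_0 k Hk0 Hd) as [-> | ->]; [left | right; left];
        rewrite Hlam; unfold Cplus, Cinv, Copp, RtoC; simpl; f_equal; field.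
    + exfalso. apply Hm, (eigenvector_zero_of_eventually_zero a lam v psi Heig).
      exact (unimodular_eigenvector_eventually_zero a lam v psi Heig Hl2 hv k Hk0 Hunit Hlam Hd).
Qed.
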